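(* For every base $\mathcal{B}$, atomic multiset $L$ and ILL formulae $\varphi,\psi$: if $\varphi\Vdash^L_{\mathcal{B}}\psi$, then $!\varphi\Vdash^L_{\mathcal{B}}\psi$.
   Context: Fix a set $\mathbb{A}$ of propositional atoms. ILL formulae: $\phi ::= p\in\mathbb{A} \mid \top \mid 0 \mid 1 \mid \phi\multimap\phi \mid \phi\otimes\phi \mid \phi\,\&\,\phi \mid \phi\oplus\phi \mid\ !\phi$. All multisets are finite; ''$\Gamma,\Delta$'' denotes multiset union. Atomic rules and bases: an atomic sequent is $P\Rightarrow p$ with $P$ a multiset of atoms, $p$ an atom. An atomic box is a multiset of atomic sequents. An atomic rule is a triple $\langle\mathbf{A},\mathbf{S},p\rangle$ with $\mathbf{A}$ a multiset of atomic boxes, $\mathbf{S}$ an atomic box, $p$ an atom. A base is a set of atomic rules. An atom $p$ is persistent in $\mathcal{B}$ if some $\langle\varnothing,\mathbf{S},p\rangle\in\mathcal{B}$ has $\mathbf{S}\neq\varnothing$. Derivability $\vdash_{\mathcal{B}}$: (Ref) $p\vdash_{\mathcal{B}}p$; (App) if $\langle\mathbf{A},\mathbf{S},p\rangle\in\mathcal{B}$ with $\mathbf{A}=\{\mathbf{T}_1,\dots,\mathbf{T}_m\}$, and there are atomic multisets $C_1,\dots,C_n$ ($n\ge m$) and a multiset $D=\{d_{m+1},\dots,d_n\}$ of atoms persistent in $\mathcal{B}$ such that $C_i,Q\vdash_{\mathcal{B}}q$ for every $i\le m$ and every $Q\Rightarrow q\in\mathbf{T}_i$, $C_j\vdash_{\mathcal{B}}d_j$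 for every $m<j\le n$, and $D,U\vdash_{\mathcal{B}}v$ for every $U\Rightarrow v\in\mathbf{S}$, then $C_1,\dots,C_n\vdash_{\mathcal{B}}p$. Support $\Vdash^L_{\mathcal{B}}$ (base $\mathcal{B}$, atomic multiset $L$), by induction on formulae: $\Vdash^L_{\mathcal{B}}p$ iff $L\vdash_{\mathcal{B}}p$; $\Vdash^L_{\mathcal{B}}\varphi\multimap\psi$ iff $\varphi\Vdash^L_{\mathcal{B}}\psi$; $\Vdash^L_{\mathcal{B}}\varphi\otimes\psi$ iff for all $\mathcal{C}\supseteq\mathcal{B}$, atomic $K$, atoms $p$: if $\varphi,\psi\Vdash^K_{\mathcal{C}}p$ then $\Vdash^{L,K}_{\mathcal{C}}p$; $\Vdash^L_{\mathcal{B}}1$ iff for all $\mathcal{C}\supseteq\mathcal{B}$, $K$, $p$: if $\Vdash^K_{\mathcal{C}}p$ then $\Vdash^{L,K}_{\mathcal{C}}p$; $\Vdash^L_{\mathcal{B}}\varphi\&\psi$ iff $\Vdash^L_{\mathcal{B}}\varphi$ and $\Vdash^L_{\mathcal{B}}\psi$; $\Vdash^L_{\mathcal{B}}\varphi\oplus\psi$ iff for all $\mathcal{C}\supseteq\mathcal{B}$, $K$, $p$: if $\varphi\Vdash^K_{\mathcal{C}}p$ and $\psi\Vdash^K_{\mathcal{C}}p$ then $\Vdash^{L,K}_{\mathcal{C}}p$; $\Vdash^L_{\mathcal{B}}0$ iff $\Vdash^{L,K}_{\mathcal{B}}p$ for all atoms $p$ and atomic $K$; $\Vdash^L_{\mathcal{B}}\top$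 always; $\Vdash^L_{\mathcal{B}}!\varphi$ iff for all $\mathcal{C}\supseteq\mathcal{B}$, $K$, $p$: if (for all $\mathcal{D}\supseteq\mathcal{C}$, $\Vdash^{\varnothing}_{\mathcal{D}}\varphi$ implies $\Vdash^K_{\mathcal{D}}p$) then $\Vdash^{L,K}_{\mathcal{C}}p$. For nonempty multisets: $\Vdash^L_{\mathcal{B}}\Gamma,\Delta$ iff $L=K,M$ with $\Vdash^K_{\mathcal{B}}\Gamma$ and $\Vdash^M_{\mathcal{B}}\Delta$. For a nonempty antecedent written $!\Delta,\Theta$, where $!\Delta$ collects the formulae with top-level connective $!$ (with $\Delta$ the formulae under those $!$) and $\Theta$ contains none: $!\Delta,\Theta\Vdash^L_{\mathcal{B}}\varphi$ iff for all $\mathcal{C}\supseteq\mathcal{B}$ and atomic $K$, if $\Vdash^{\varnothing}_{\mathcal{C}}\delta$ for every $\delta\in\Delta$ and $\Vdash^K_{\mathcal{C}}\Theta$ then $\Vdash^{L,K}_{\mathcal{C}}\varphi$ (when $\Theta$ is empty, $K$ is empty). In particular $!\varphi\Vdash^L_{\mathcal{B}}\psi$ iff for all $\mathcal{C}\supseteq\mathcal{B}$, $\Vdash^{\varnothing}_{\mathcal{C}}\varphi$ implies $\Vdash^L_{\mathcal{C}}\psi$. An empty antecedent: $\varnothing\Vdash^L_{\mathcal{B}}\varphi$ means $\Vdash^L_{\mathcal{B}}\varphi$. *)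

From Stdlib Require List.
From mathcomp Require Import all_boot.
Set Implicit Arguments.
Unset Strict Implicit.
Unset Printing Implicit Defensive.

Section ILL.
Variable atom : eqType.

(* Finite multisets of atoms are represented by lists; multiset equality is
   perm_eq and multiset union is list concatenation. *)

Inductive formula : Type :=
| Atom of atom
| Top
| Zero
| One
| Lolli of formula & formula
| Tensor of formula & formula
| With of formula & formula
| Plus of formula & formula
| Bang of formula.

Definition asequent := (seq atom * atom)%type.
Definition abox := seq asequent.

Record rule := mkRule {
  r_prem : seq abox;
  r_side : abox;
  r_concl : atom
}.

Definition base := rule -> Prop.

Definition extends (B C : base) : Prop := forall r, B r -> C r.

Definition persistent (B : base) (p : atom) : Prop :=
  exists r, B r /\ r_prem r = [::] /\ r_side r <> [::] /\ r_concl r = p.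

Inductive derives (B : base) : seq atom -> atom -> Prop :=
| d_ref p : derives B [:: p] p
| d_app (r : rule) (Cs : seq (seq atom)) (ds : seq atom) (L : seq atom) :
    B r ->
    size Cs = size (r_prem r) + size ds ->
    (forall d, d \in ds -> persistent B d) ->
    (* C_i, Q |- q for every i <= m and every Q => q in T_i *)
    (forall T C, (T, C) \in zip (r_prem r) (take (size (r_prem r)) Cs) ->
       forall Q q, (Q, q) \in T -> derives B (C ++ Q) q) ->
    (* C_j |- d_j for m < j <= n *)
    (forall C d, (C, d) \in zip (drop (size (r_prem r)) Cs) ds -> derives B C d) ->
    (forall U v, (U, v) \in r_side r -> derives B (ds ++ U) v) ->
    perm_eq L (flatten Cs) ->
    derives B L (r_concl r).

Definition suppT := base -> seq atom -> Prop.

(* |-^K_B Theta for a multiset Theta (given by the support predicates of its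
   elements); the empty multiset is supported exactly by the empty K. *)
Fixpoint sup_multi (fs : seq suppT) (B : base) (K : seq atom) : Prop :=
  match fs with
  | [::] => K = [::]
  | [:: f] => f B K
  | f :: fs' => exists K1 K2, perm_eq K (K1 ++ K2) /\ f B K1 /\ sup_multi fs' B K2
  end.

(* Each antecedent item is (true, support of delta) for a
   formula !delta, or (false, support of theta) for a formula theta whose top
   connective is not !.
   !Delta, Theta |-^L_B goal  iff  for all C >= B and K, if |-^0_C delta for all
   delta in Delta and |-^K_C Theta then |-^{L,K}_C goal. *)
Definition ante_sup (items : seq (bool * suppT)) (goal : suppT) (B : base)
    (L : seq atom) : Prop :=
  if items is [::] then goal B L else
  forall C, extends B C -> forall K : seq atom,
    (forall x, Stdlib.Lists.List.In x items -> x.1 -> x.2 C [::]) ->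
    sup_multi [seq x.2 | x <- items & ~~ x.1] C K ->
    goal C (L ++ K).

Definition atom_sup (p : atom) : suppT := fun B L => derives B L p.

Fixpoint sup (phi : formula) (B : base) (L : seq atom) {struct phi} : Prop :=
  match phi with
  | Atom p => derives B L p
  | Lolli a b =>
      ante_sup [:: match a with Bang d => (true, sup d) | _ => (false, sup a) end]
               (sup b) B L
  | Tensor a b =>
      forall C, extends B C -> forall (K : seq atom) (p : atom),
        ante_sup [:: match a with Bang d => (true, sup d) | _ => (false, sup a) end;
                     match b with Bang d => (true, sup d) | _ => (false, sup b) end]
                 (atom_sup p) C K ->
        derives C (L ++ K) p
  | One =>
      forall C, extends B C -> forall (K : seq atom) (p : atom),
        derives C K p -> derives C (L ++ K) p
  | With a b => sup a B L /\ sup b B L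
  | Plus a b =>
      forall C, extends B C -> forall (K : seq atom) (p : atom),
        ante_sup [:: match a with Bang d => (true, sup d) | _ => (false, sup a) end]
                 (atom_sup p) C K ->
        ante_sup [:: match b with Bang d => (true, sup d) | _ => (false, sup b) end]
                 (atom_sup p) C K ->
        derives C (L ++ K) p
  | Zero => forall (p : atom) (K : seq atom), derives B (L ++ K) p
  | Top => True
  | Bang a =>
      forall C, extends B C -> forall (K : seq atom) (p : atom),
        (forall D, extends C D -> sup a D [::] -> derives D K p) ->
        derives C (L ++ K) p
  end.

Definition item (phi : formula) : bool * suppT :=
  match phi with Bang d => (true, sup d) | _ => (false, sup phi) end.

Definition sequent (Gamma : seq formula) (chi : formula) (B : base) (L : seq atom) : Prop :=
  ante_sup (map item Gamma) (sup chi) B L.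

End ILL.

From mathcomp Require Import all_boot.

(* In an extension [C] of [B], the antecedent [!phi] provides only
   [|-^0_C phi], with empty resources.  When [phi] has no top-level [!] this is
   exactly an instance of the hypothesis; when [phi = !d] one also needs
   dereliction, [|-^0_C !d] implies [|-^0_C d].  Dereliction is proved by
   induction on [d] via a generalised elimination principle: if [L] eliminates
   into atoms as [M] does in every extension satisfying [Q] ([elim_sup]), then
   [L] supports every formula that [M] supports in all bases satisfying [Q].
   The [Q]s and [M]s must be general because the [-o] case enlarges [M] by the
   resources of the antecedent and restricts [Q] to the current extension. *)

Section Dereliction.
Variable atom : eqType.
Implicit Types (B C D : base atom) (L K M : seq atom) (d : formula atom).

Lemma extends_refl B : extends B B.
Proof. by []. Qed.

Lemma extends_trans {B C D} : extends B C -> extends C D -> extends B D.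
Proof. by move=> BC CD r /BC /CD. Qed.

Lemma derives_mono {B C L p} : extends B C -> derives B L p -> derives C L p.
Proof.
move=> BC; elim=> {L p} [p|r Cs ds L Br size_Cs pers _ IHprem _ IHpers _ IHside permL].
  exact: d_ref.
apply: (d_app (BC _ Br) size_Cs _ IHprem IHpers IHside permL).
by move=> d /pers [r' [Br' prem_r']]; exists r'; split=> //; apply: BC.
Qed.

Lemma ante_sup_mono {x xs} {g : suppT atom} {B C L} :
  extends B C -> ante_sup (x :: xs) g B L -> ante_sup (x :: xs) g C L.
Proof. by move=> BC h D CD; apply: h; apply: extends_trans BC CD. Qed.

Lemma sup_mono {d B C L} : extends B C -> sup d B L -> sup d C L.
Proof.
elim: d B C L => [q||||a _ b _|a _ b _|a IHa b IHb|a _ b _|a _] B C L BC /=;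
  try by move=> h D CD; apply: h; apply: extends_trans BC CD.
- exact: derives_mono.
- by [].
- by move=> h p K; apply: derives_mono BC (h p K).
- by case=> ha hb; split; [apply: IHa ha | apply: IHb hb].
Qed.

Lemma item_sup_mono {a : formula atom} {B C L} :
  extends B C -> (item a).2 B L -> (item a).2 C L.
Proof. by move=> BC; case: a => [q||||a b|a b|a b|a b|a]; exact: sup_mono BC. Qed.

Definition elim_sup (Q : base atom -> Prop) M B L : Prop :=
  forall C, extends B C -> forall K p,
    (forall D, extends C D -> Q D -> derives D (M ++ K) p) ->
    derives C (L ++ K) p.

Lemma elim_sup_catr Q M B C L K :
  extends B C -> elim_sup Q M B L ->
  elim_sup (fun D => Q D /\ extends C D) (M ++ K) C (L ++ K).
Proof.
move=> BC hL C' CC' K' p hM; rewrite -catA.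
apply: (hL _ (extends_trans BC CC')) => D C'D QD; rewrite catA.
by apply: hM => //; split=> //; apply: extends_trans CC' C'D.
Qed.

Lemma sup_of_elim_sup d B L (Q : base atom -> Prop) M :
  (forall D, Q D -> sup d D M) -> elim_sup Q M B L -> sup d B L.
Proof.
elim: d B L Q M => [q||||a _ b IHb|a _ b _|a IHa b IHb|a _ b _|a _]
  B L Q M hM hL.
- rewrite -[L]cats0; apply: (hL B (extends_refl B)) => D _ /hM.
  by rewrite cats0.
- by [].
- by move=> p K; apply: (hL B (extends_refl B)) => D _ /hM.
- move=> C BC K p hK; apply: (hL C BC) => D CD /hM hD.
  exact: hD D (extends_refl D) K p (derives_mono CD hK).
- change (ante_sup [:: item a] (sup b) B L) => C BC K prem_bang prem_multi.
  apply: (IHb C (L ++ K) (fun D => Q D /\ extends C D) (M ++ K));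
    last exact: elim_sup_catr BC hL.
  move=> D [QD CD]; have hD : ante_sup [:: item a] (sup b) D M := hM D QD.
  apply: (hD D (extends_refl D) K).
    move=> x [<-|[]] x1; apply: item_sup_mono CD _.
    exact: prem_bang (or_introl erefl) x1.
  have := @item_sup_mono a C D K CD; move: prem_multi.
  by case: (item a) => [[] f] //= hf; apply.
- move=> C BC K p h; apply: (hL C BC K p) => D CD /hM hD.
  exact: hD D (extends_refl D) K p (ante_sup_mono CD h).
- by split; [apply: (IHa B L Q M) | apply: (IHb B L Q M)] => // D /hM [].
- move=> C BC K p ha hb; apply: (hL C BC K p) => D CD /hM hD.
  exact: hD D (extends_refl D) K p (ante_sup_mono CD ha) (ante_sup_mono CD hb).
- move=> C BC K p h; apply: (hL C BC K p) => D CD /hM hD.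
  apply: (hD D (extends_refl D) K p) => D' DD'.
  by apply: h; apply: extends_trans CD DD'.
Qed.

Lemma sup_derelict d B L : sup (Bang d) B L -> sup d B L.
Proof. exact: sup_of_elim_sup (fun D (hd : sup d D [::]) => hd). Qed.

Lemma sequent1_sup_nil (phi psi : formula atom) B C L :
  sequent [:: phi] psi B L -> extends B C -> sup phi C [::] -> sup psi C L.
Proof.
move=> h BC hphi; rewrite -[L]cats0.
case: phi h hphi => [q||||a b|a b|a b|a b|d] h hphi;
  apply: (h C BC [::]) => //= x [<-|[]] //= _.
exact: sup_derelict.
Qed.

End Dereliction.

Theorem lemma8 (atom : eqType) (B : base atom) (L : seq atom)
    (phi psi : formula atom) :
  sequent [:: phi] psi B L -> sequent [:: Bang phi] psi B L.
Proof.
move=> h C BC K prem_bang /= ->; rewrite cats0.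
exact: sequent1_sup_nil h BC (prem_bang _ (or_introl erefl) isT).
Qed.
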